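(* Let $f=f_{I+1}\circ\cdots\circ f_1:\mathbb R^{d_1}\to\mathbb R^{d_3}$ be an infinite-width neural network of depth $I\ge1$, viewed as a map $f:\mathbb R^{d_1}\times\mathcal U\to\mathbb R^{d_3}$ of the input $x$ and the parameter $\mu=(\mu_0,\dots,\mu_I)\in\mathcal U$. Then $f$ is continuous (jointly in $x\in\mathbb R^{d_1}$ and $\mu\in\mathcal U$, with the product metric on $\mathbb R^{d_1}\times\mathcal U$).
   Context: Let $\mathcal X_0=\mathbb R^{d_1}$, $\mathcal X_i=\ell^2(\mathbb N)$ for $1\le i\le I$ (sequences indexed by $\{0,1,\dots\}$), $\mathcal X_{I+1}=\mathbb R^{d_3}$; $\Theta_0=\{0,\dots,d_1\}$, $\Theta_i=\mathbb N\cup\{0\}$ for $1\le i\le I$. The layer-$i$ parameter ($i=0,\dots,I$) is a vector measure $\mu_i=\sum_{m\in\Theta_i}w^{i+1}_m\delta_m$ with $w^{i+1}_m\in\mathcal X_{i+1}$ and finite total variation norm $\|\mu_i\|_{TV}=\sum_m\|w^{i+1}_m\|_{\mathcal X_{i+1}}$; these form Banach spaces $\mathcal M(\Theta_i,\mathcal X_{i+1})$, and $\mathcal U=\prod_{i=0}^I\mathcal M(\Theta_i,\mathcal X_{i+1})$ carries the product metric. With $\rho_0(x,0)=1$, $\rho_0(x,n)=x_n$ ($n=1,\dots,d_1$) and, for $i\ge1$, $\rho_i(y,0)=1$, $\rho_i(y,n)=\sigma(y_{n-1})$ ($n\ge1$), the layers are $f_i(y)=\int_{\Theta_{i-1}}\rho_{i-1}(y,\theta)\,d\mu_{i-1}(\theta)=\sum_m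 w^{i}_m\rho_{i-1}(y,m)$, i.e. $f_1(x)=W^1x+b^1$ and $f_{i+1}(y)=W^{i+1}\sigma(y)+b^{i+1}$ with $b^{i+1}=w^{i+1}_0$, $W^{i+1}y=\sum_{m\ge1}w^{i+1}_my_{m-1}$. Here $\sigma$ is the ReLU function applied componentwise. *)

From Stdlib Require Import Reals.
From Coquelicot Require Import Coquelicot.
Open Scope R_scope.

Definition relu (t : R) : R := Rmax 0 t.

Fixpoint fsum (n : nat) (f : nat -> R) : R :=
  match n with
  | O => 0
  | S n' => fsum n' f + f n'
  end.

(* R^d is represented by sequences v : nat -> R of which only the
   coordinates v 0, ..., v (d-1) are relevant; Euclidean norm on R^d. *)
Definition eucl_norm (d : nat) (v : nat -> R) : R :=
  sqrt (fsum d (fun k => (v k) ^ 2)).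

Definition sq_summable (u : nat -> R) : Prop := ex_series (fun n => (u n) ^ 2).
Definition l2norm (u : nat -> R) : R := sqrt (Series (fun n => (u n) ^ 2)).

(* A parameter mu = (mu_0, ..., mu_I) is encoded as
     mu i m k = k-th coordinate of the weight w^{i+1}_m in X_{i+1},
   for i = 0..I, m in Theta_i.  Theta_0 = {0..d1}, Theta_i = N (i >= 1).
   X_{i+1} = ell^2 for i < I, X_{I+1} = R^{d3}. *)

Definition tv (d1 d3 I i : nat) (w : nat -> nat -> R) : R :=
  if Nat.eqb i 0 then
    (if Nat.eqb I 0 then fsum (S d1) (fun m => eucl_norm d3 (w m))
     else fsum (S d1) (fun m => l2norm (w m)))
  else if Nat.ltb i I then Series (fun m => l2norm (w m))
  else Series (fun m => eucl_norm d3 (w m)).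

(* mu is an element of U = prod_{i=0}^I M(Theta_i, X_{i+1}):
   each weight lies in X_{i+1} and the total variation is finite. *)
Definition admissible (d1 d3 I : nat) (mu : nat -> nat -> nat -> R) : Prop :=
  (forall i m, (i < I)%nat -> sq_summable (mu i m)) /\
  (* finite total variation of mu_1, ..., mu_{I-1} (mu_0 is a finite sum) *)
  (forall i, (0 < i)%nat -> (i < I)%nat -> ex_series (fun m => l2norm (mu i m))) /\
  ((0 < I)%nat -> ex_series (fun m => eucl_norm d3 (mu I m))).

Definition param_dist (d1 d3 I : nat) (mu mu' : nat -> nat -> nat -> R) : R :=
  fsum (S I) (fun i => tv d1 d3 I i (fun m k => mu i m k - mu' i m k)).

(* feature maps: rho_0(x,0)=1, rho_0(x,n)=x_n (n=1..d1), stored 0-based as x (n-1);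
   rho_i(y,0)=1, rho_i(y,n)=sigma(y_{n-1}) *)
Definition rho0 (x : nat -> R) (m : nat) : R :=
  match m with O => 1 | S n => x n end.
Definition rho (y : nat -> R) (m : nat) : R :=
  match m with O => 1 | S n => relu (y n) end.

(* layers j : f_{j+1} o ... o f_1 (x) *)
Fixpoint layers (d1 : nat) (mu : nat -> nat -> nat -> R) (x : nat -> R) (j : nat)
  : nat -> R :=
  match j with
  | O => fun k => fsum (S d1) (fun m => mu O m k * rho0 x m)
  | S j' => fun k => Series (fun m => mu (S j') m k * rho (layers d1 mu x j') m)
  end.

Definition net (d1 I : nat) (mu : nat -> nat -> nat -> R) (x : nat -> R) : nat -> R :=
  layers d1 mu x I.

From Stdlib Require Import Reals Lra Lia.
From Coquelicot Require Import Coquelicot.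
Open Scope R_scope.

(* Every layer has the form y |-> sum_m w_m rho(y, m), where rho(y, m) is bounded by
   1 + sup_k |y_k| and, ReLU being 1-Lipschitz, moves by at most the sup-norm change of y.
   Writing w c - w' c' = (w - w') c + w' (c - c'), a layer whose input is bounded by M changes by
   at most (1 + M) ||mu_i - mu'_i||_TV + D (||mu_i||_TV + ||mu_i - mu'_i||_TV) when its input
   changes by D in sup norm.  Induction over the layers then gives boundedness and sup-norm
   continuity of every hidden layer, and on R^d3 the Euclidean norm is at most sqrt d3 times the
   sup norm. *)

Lemma fsum_nonneg n f : (forall m, (m < n)%nat -> 0 <= f m) -> 0 <= fsum n f.
Proof.
  induction n as [|n IH]; simpl; intros Hf; [lra|].
  assert (0 <= fsum n f) by (apply IH; intros; apply Hf; lia).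
  specialize (Hf n ltac:(lia)). lra.
Qed.

Lemma fsum_le n f g : (forall m, (m < n)%nat -> f m <= g m) -> fsum n f <= fsum n g.
Proof.
  induction n as [|n IH]; simpl; intros Hfg; [lra|].
  assert (fsum n f <= fsum n g) by (apply IH; intros; apply Hfg; lia).
  specialize (Hfg n ltac:(lia)). lra.
Qed.

Lemma fsum_ge_term n f k :
  (forall m, (m < n)%nat -> 0 <= f m) -> (k < n)%nat -> f k <= fsum n f.
Proof.
  induction n as [|n IH]; simpl; intros Hf Hk; [lia|].
  assert (0 <= fsum n f) by (apply fsum_nonneg; intros; apply Hf; lia).
  destruct (Nat.eq_dec k n) as [->|Hkn]; [lra|].
  assert (f k <= fsum n f) by (apply IH; [intros; apply Hf; lia | lia]).
  specialize (Hf n ltac:(lia)). lra.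
Qed.

Lemma fsum_ext n f g : (forall m, (m < n)%nat -> f m = g m) -> fsum n f = fsum n g.
Proof.
  induction n as [|n IH]; simpl; intros Hfg; [reflexivity|].
  rewrite IH, Hfg; [reflexivity | lia | intros; apply Hfg; lia].
Qed.

Lemma fsum_plus n f g : fsum n (fun m => f m + g m) = fsum n f + fsum n g.
Proof. induction n as [|n IH]; simpl; [ring | rewrite IH; ring]. Qed.

Lemma fsum_minus n f g : fsum n (fun m => f m - g m) = fsum n f - fsum n g.
Proof. induction n as [|n IH]; simpl; [ring | rewrite IH; ring]. Qed.

Lemma fsum_scal n c f : fsum n (fun m => c * f m) = c * fsum n f.
Proof. induction n as [|n IH]; simpl; [ring | rewrite IH; ring]. Qed.

Lemma fsum_const n c : fsum n (fun _ => c) = INR n * c.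
Proof. induction n as [|n IH]; simpl fsum; [simpl; ring | rewrite IH, S_INR; ring]. Qed.

Lemma Rabs_fsum_le n f : Rabs (fsum n f) <= fsum n (fun m => Rabs (f m)).
Proof.
  induction n as [|n IH]; simpl; [rewrite Rabs_R0; lra|].
  eapply Rle_trans; [apply Rabs_triang | lra].
Qed.

Lemma Series_nonneg a : (forall n, 0 <= a n) -> ex_series a -> 0 <= Series a.
Proof.
  intros Ha Ea. replace 0 with (Series (fun n => 0 * a n)).
  - apply Series_le; auto. intros n. specialize (Ha n). lra.
  - rewrite Series_scal_l. ring.
Qed.

Lemma Series_ge_term a k : (forall n, 0 <= a n) -> ex_series a -> a k <= Series a.
Proof.
  intros Ha Ea. rewrite (Series_incr_n a (S k)) by (auto; lia). simpl Nat.pred.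
  assert (0 <= Series (fun j => a (S k + j)%nat)).
  { apply Series_nonneg; [auto | apply ex_series_incr_n, Ea]. }
  destruct k as [|k]; simpl sum_f_R0; [lra|].
  assert (0 <= sum_f_R0 a k) by (apply cond_pos_sum; auto). lra.
Qed.

Lemma ex_series_Rabs_le (a b : nat -> R) :
  (forall n, Rabs (a n) <= b n) -> ex_series b -> ex_series a.
Proof. apply (@ex_series_le R_AbsRing R_CompleteNormedModule). Qed.

Lemma ex_series_plus_R (a b : nat -> R) :
  ex_series a -> ex_series b -> ex_series (fun n => a n + b n).
Proof. apply (@ex_series_plus R_AbsRing R_NormedModule). Qed.

Lemma ex_series_scal_R c (a : nat -> R) : ex_series a -> ex_series (fun n => c * a n).
Proof. apply (@ex_series_scal_l R_AbsRing R_NormedModule). Qed.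

Lemma l2norm_nonneg u : 0 <= l2norm u.
Proof. apply sqrt_pos. Qed.

Lemma eucl_norm_nonneg d v : 0 <= eucl_norm d v.
Proof. apply sqrt_pos. Qed.

Lemma Rabs_le_sqrt a S : a ^ 2 <= S -> Rabs a <= sqrt S.
Proof.
  intros HS. rewrite <- (sqrt_pow2 (Rabs a)) by apply Rabs_pos.
  apply sqrt_le_1_alt. rewrite pow2_abs. exact HS.
Qed.

Lemma Rabs_le_l2norm u k : sq_summable u -> Rabs (u k) <= l2norm u.
Proof.
  intros Hu. apply Rabs_le_sqrt, (Series_ge_term (fun n => u n ^ 2)); auto.
  intros n; apply pow2_ge_0.
Qed.

Lemma Rabs_le_eucl_norm d v k : (k < d)%nat -> Rabs (v k) <= eucl_norm d v.
Proof.
  intros Hk. apply Rabs_le_sqrt, (fsum_ge_term d (fun n => v n ^ 2)); auto.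
  intros n _; apply pow2_ge_0.
Qed.

Lemma eucl_norm_le_sup d v e :
  0 <= e -> (forall k, (k < d)%nat -> Rabs (v k) <= e) -> eucl_norm d v <= sqrt (INR d) * e.
Proof.
  intros He Hv. unfold eucl_norm.
  rewrite <- (sqrt_pow2 e) by exact He. rewrite <- sqrt_mult by (auto using pos_INR, pow2_ge_0).
  apply sqrt_le_1_alt. rewrite <- fsum_const. apply fsum_le. intros k Hk.
  rewrite <- (pow2_abs (v k)). specialize (Hv k Hk). pose proof (Rabs_pos (v k)). nra.
Qed.

Lemma sq_sub_le a b : (a - b) ^ 2 <= 2 * a ^ 2 + 2 * b ^ 2.
Proof. pose proof (pow2_ge_0 (a + b)). nra. Qed.

Lemma sqrt_le_twice_sum S SA SB : 0 <= SA -> 0 <= SB -> S <= 2 * SA + 2 * SB ->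
  sqrt S <= 2 * (sqrt SA + sqrt SB).
Proof.
  intros HA HB HS. pose proof (sqrt_pos SA). pose proof (sqrt_pos SB).
  rewrite <- (sqrt_pow2 (2 * (sqrt SA + sqrt SB))) by lra.
  apply sqrt_le_1_alt. rewrite <- (pow2_sqrt SA), <- (pow2_sqrt SB) in HS by assumption.
  assert (0 <= sqrt SA * sqrt SB) by (apply Rmult_le_pos; assumption). nra.
Qed.

Lemma sq_summable_sub u u' :
  sq_summable u -> sq_summable u' -> sq_summable (fun k => u k - u' k).
Proof.
  intros Hu Hu'. apply (ex_series_Rabs_le _ (fun n => 2 * u n ^ 2 + 2 * u' n ^ 2)).
  - intros n. rewrite Rabs_pos_eq by apply pow2_ge_0. apply sq_sub_le.
  - apply ex_series_plus_R; apply ex_series_scal_R; assumption.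
Qed.

Lemma l2norm_sub_le u u' : sq_summable u -> sq_summable u' ->
  l2norm (fun k => u k - u' k) <= 2 * (l2norm u + l2norm u').
Proof.
  intros Hu Hu'. apply sqrt_le_twice_sum.
  1, 2: apply Series_nonneg; [intros; apply pow2_ge_0 | assumption].
  rewrite <- !Series_scal_l, <- Series_plus by (apply ex_series_scal_R; assumption).
  apply Series_le; [intros n; split; [apply pow2_ge_0 | apply sq_sub_le]|].
  apply ex_series_plus_R; apply ex_series_scal_R; assumption.
Qed.

Lemma eucl_norm_sub_le d v v' :
  eucl_norm d (fun k => v k - v' k) <= 2 * (eucl_norm d v + eucl_norm d v').
Proof.
  apply sqrt_le_twice_sum.
  1, 2: apply fsum_nonneg; intros; apply pow2_ge_0.
  rewrite <- !fsum_scal, <- fsum_plus. apply fsum_le; intros; apply sq_sub_le.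
Qed.

Lemma Rabs_mul_le a c b C : Rabs a <= b -> Rabs c <= C -> Rabs (a * c) <= C * b.
Proof.
  intros Ha Hc. rewrite Rabs_mult, Rmult_comm.
  apply Rmult_le_compat; auto using Rabs_pos.
Qed.

Lemma Rabs_sub_le_add a a' b bd : Rabs a <= b -> Rabs (a - a') <= bd -> Rabs a' <= b + bd.
Proof.
  intros Ha Hd. replace a' with (a - (a - a')) by ring.
  eapply Rle_trans; [apply Rabs_triang|]. rewrite Rabs_Ropp. lra.
Qed.

Section BoundedProducts.

Variables (b : nat -> R) (C : R).

Lemma ex_series_mul_bounded a c : (forall m, Rabs (a m) <= b m) -> ex_series b ->
  (forall m, Rabs (c m) <= C) -> ex_series (fun m => a m * c m).
Proof.
  intros Ha Eb Hc. apply (ex_series_Rabs_le _ (fun m => C * b m)).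
  - intros m. apply Rabs_mul_le; auto.
  - apply ex_series_scal_R, Eb.
Qed.

Lemma Rabs_Series_mul_le a c : (forall m, Rabs (a m) <= b m) -> ex_series b ->
  (forall m, Rabs (c m) <= C) -> Rabs (Series (fun m => a m * c m)) <= C * Series b.
Proof.
  intros Ha Eb Hc. rewrite <- Series_scal_l.
  eapply Rle_trans; [apply Series_Rabs|].
  - apply (ex_series_Rabs_le _ (fun m => C * b m)); [|apply ex_series_scal_R, Eb].
    intros m. rewrite Rabs_Rabsolu. apply Rabs_mul_le; auto.
  - apply Series_le; [|apply ex_series_scal_R, Eb].
    intros m. split; [apply Rabs_pos | apply Rabs_mul_le; auto].
Qed.

Lemma Rabs_fsum_mul_le n a c : (forall m, (m < n)%nat -> Rabs (a m) <= b m) ->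
  (forall m, (m < n)%nat -> Rabs (c m) <= C) ->
  Rabs (fsum n (fun m => a m * c m)) <= C * fsum n b.
Proof.
  intros Ha Hc. rewrite <- fsum_scal.
  eapply Rle_trans; [apply Rabs_fsum_le|].
  apply fsum_le. intros m Hm. apply Rabs_mul_le; auto.
Qed.

End BoundedProducts.

Lemma Rabs_Series_mul_sub_le (a a' c c' b bd : nat -> R) C D :
  (forall m, Rabs (a m) <= b m) -> (forall m, Rabs (a m - a' m) <= bd m) ->
  ex_series b -> ex_series bd ->
  (forall m, Rabs (c m) <= C) -> (forall m, Rabs (c m - c' m) <= D) ->
  Rabs (Series (fun m => a m * c m) - Series (fun m => a' m * c' m))
    <= C * Series bd + D * (Series b + Series bd).
Proof.
  intros Ha Hd Eb Ebd Hc Hcd.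
  assert (Ha' : forall m, Rabs (a' m) <= b m + bd m)
    by (intros m; apply (Rabs_sub_le_add (a m)); auto).
  assert (Ebbd : ex_series (fun m => b m + bd m)) by (apply ex_series_plus_R; auto).
  assert (Hc' : forall m, Rabs (c' m) <= C + D)
    by (intros m; apply (Rabs_sub_le_add (c m)); auto).
  rewrite <- Series_minus.
  2: apply (ex_series_mul_bounded b C); auto.
  2: apply (ex_series_mul_bounded _ (C + D) _ _ Ha'); auto.
  rewrite (Series_ext _ (fun m => (a m - a' m) * c m + a' m * (c m - c' m)))
    by (intros; ring).
  rewrite Series_plus.
  2: apply (ex_series_mul_bounded bd C); auto.
  2: apply (ex_series_mul_bounded _ D _ _ Ha'); auto.
  rewrite <- (Series_plus b bd) by auto.
  eapply Rle_trans; [apply Rabs_triang|].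
  apply Rplus_le_compat; [apply (Rabs_Series_mul_le bd) | apply (Rabs_Series_mul_le (fun m => b m + bd m))]; auto.
Qed.

Lemma Rabs_fsum_mul_sub_le n (a a' c c' b bd : nat -> R) C D :
  (forall m, (m < n)%nat -> Rabs (a m) <= b m) ->
  (forall m, (m < n)%nat -> Rabs (a m - a' m) <= bd m) ->
  (forall m, (m < n)%nat -> Rabs (c m) <= C) ->
  (forall m, (m < n)%nat -> Rabs (c m - c' m) <= D) ->
  Rabs (fsum n (fun m => a m * c m) - fsum n (fun m => a' m * c' m))
    <= C * fsum n bd + D * (fsum n b + fsum n bd).
Proof.
  intros Ha Hd Hc Hcd. rewrite <- fsum_minus, <- fsum_plus.
  rewrite (fsum_ext n _ (fun m => (a m - a' m) * c m + a' m * (c m - c' m))) by (intros; ring).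
  rewrite fsum_plus. eapply Rle_trans; [apply Rabs_triang|].
  apply Rplus_le_compat; [apply Rabs_fsum_mul_le | apply (Rabs_fsum_mul_le (fun m => b m + bd m))];
    intros m Hm; auto; apply (Rabs_sub_le_add (a m)); auto.
Qed.

Lemma Rabs_relu_le a : Rabs (relu a) <= Rabs a.
Proof. unfold relu, Rmax. destruct (Rle_dec 0 a); unfold Rabs; repeat destruct Rcase_abs; lra. Qed.

Lemma relu_sub_le a b : Rabs (relu a - relu b) <= Rabs (a - b).
Proof.
  unfold relu, Rmax. destruct (Rle_dec 0 a), (Rle_dec 0 b); unfold Rabs;
    repeat destruct Rcase_abs; lra.
Qed.

Lemma Rabs_rho_le y M m : 0 <= M -> (forall k, Rabs (y k) <= M) -> Rabs (rho y m) <= 1 + M.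
Proof.
  intros HM Hy. destruct m as [|m]; simpl; [rewrite Rabs_R1; lra|].
  specialize (Hy m). pose proof (Rabs_relu_le (y m)). lra.
Qed.

Lemma rho_sub_le y y' D m : 0 <= D -> (forall k, Rabs (y k - y' k) <= D) ->
  Rabs (rho y m - rho y' m) <= D.
Proof.
  intros HD Hyy'. destruct m as [|m]; simpl; [rewrite Rminus_eq_0, Rabs_R0; exact HD|].
  eapply Rle_trans; [apply relu_sub_le | apply Hyy'].
Qed.

Lemma Rabs_rho0_le d x m : (m < S d)%nat -> Rabs (rho0 x m) <= 1 + eucl_norm d x.
Proof.
  intros Hm. pose proof (eucl_norm_nonneg d x).
  destruct m as [|m]; simpl; [rewrite Rabs_R1; lra|].
  pose proof (Rabs_le_eucl_norm d x m ltac:(lia)). lra.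
Qed.

Lemma rho0_sub_le d x x' m : (m < S d)%nat ->
  Rabs (rho0 x m - rho0 x' m) <= eucl_norm d (fun k => x k - x' k).
Proof.
  intros Hm. destruct m as [|m]; simpl.
  - rewrite Rminus_eq_0, Rabs_R0. apply eucl_norm_nonneg.
  - apply (Rabs_le_eucl_norm d (fun k => x k - x' k)). lia.
Qed.

Lemma small_perturbation C B eps : 0 <= C -> 0 <= B -> 0 < eps ->
  exists delta, 0 < delta /\
    forall p e, 0 <= p <= delta -> 0 <= e <= delta -> C * p + e * (B + p) <= eps.
Proof.
  intros HC HB He. set (delta := Rmin 1 (eps / (C + B + 1))).
  assert (Hd1 : delta <= 1) by apply Rmin_l.
  assert (Hd2 : delta * (C + B + 1) <= eps).
  { replace eps with (eps / (C + B + 1) * (C + B + 1)) by (field; lra).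
    apply Rmult_le_compat_r; [lra | apply Rmin_r]. }
  exists delta. split; [apply Rmin_pos; [lra | apply Rdiv_lt_0_compat; lra]|].
  intros p e Hp He'.
  assert (C * p <= C * delta) by (apply Rmult_le_compat_l; lra).
  assert (e * B <= delta * B) by (apply Rmult_le_compat_r; lra).
  assert (e * p <= delta * 1) by (apply Rmult_le_compat; lra).
  nra.
Qed.

Lemma Series_rho_sub_small b M eps : (forall m, 0 <= b m) -> ex_series b -> 0 <= M -> 0 < eps ->
  exists delta, 0 < delta /\ forall a a' bd y y',
    (forall m, Rabs (a m) <= b m) -> (forall m, Rabs (a m - a' m) <= bd m) ->
    ex_series bd -> Series bd <= delta ->
    (forall k, Rabs (y k) <= M) -> (forall k, Rabs (y k - y' k) <= delta) ->
    Rabs (Series (fun m => a m * rho y m) - Series (fun m => a' m * rho y' m)) <= eps.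
Proof.
  intros Hb Eb HM He.
  destruct (small_perturbation (1 + M) (Series b) eps) as [delta [Hd Hsmall]];
    [lra | apply Series_nonneg; auto | exact He|].
  exists delta. split; [exact Hd|]. intros a a' bd y y' Ha Hd' Ebd Hbd Hy Hyy'.
  eapply Rle_trans; [apply (Rabs_Series_mul_sub_le _ _ _ _ b bd (1 + M) delta); auto|].
  - intros m. apply Rabs_rho_le; auto.
  - intros m. apply rho_sub_le; [lra | auto].
  - apply Hsmall; [|lra]. split; [|exact Hbd].
    apply Series_nonneg; [|exact Ebd]. intros m. eapply Rle_trans; [apply Rabs_pos | apply Hd'].
Qed.

Definition net_dist d1 d3 I (x : nat -> R) mu (x' : nat -> R) mu' : R :=
  eucl_norm d1 (fun k => x k - x' k) + param_dist d1 d3 I mu mu'.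

(* Hidden layers are compared in the sup norm over all coordinates ([P := fun _ => True]),
   the output layer on its [d3] relevant coordinates. *)
Definition layer_continuous_at d1 d3 I x mu j (P : nat -> Prop) : Prop :=
  forall eps, 0 < eps -> exists delta, 0 < delta /\
    forall x' mu', admissible d1 d3 I mu' -> net_dist d1 d3 I x mu x' mu' < delta ->
    forall k, P k -> Rabs (layers d1 mu x j k - layers d1 mu' x' j k) <= eps.

Section Network.

Variables d1 d3 I : nat.
Hypothesis HI : (1 <= I)%nat.

Lemma tv_0 w : tv d1 d3 I 0 w = fsum (S d1) (fun m => l2norm (w m)).
Proof. unfold tv. destruct I; [lia | reflexivity]. Qed.

Lemma tv_hidden i w : (0 < i)%nat -> (i < I)%nat ->
  tv d1 d3 I i w = Series (fun m => l2norm (w m)).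
Proof.
  intros Hi0 HiI. unfold tv. destruct i as [|i]; [lia|].
  simpl Nat.eqb. rewrite (proj2 (Nat.ltb_lt _ _) HiI). reflexivity.
Qed.

Lemma tv_output w : tv d1 d3 I I w = Series (fun m => eucl_norm d3 (w m)).
Proof.
  unfold tv. destruct I as [|i]; [lia|].
  simpl Nat.eqb. rewrite Nat.ltb_irrefl. reflexivity.
Qed.

Section TwoParameters.

Variables mu mu' : nat -> nat -> nat -> R.
Hypotheses (Hmu : admissible d1 d3 I mu) (Hmu' : admissible d1 d3 I mu').

Lemma ex_series_l2norm_sub i : (0 < i)%nat -> (i < I)%nat ->
  ex_series (fun m => l2norm (fun k => mu i m k - mu' i m k)).
Proof.
  intros Hi0 HiI. destruct Hmu as [Hsq [Htv _]], Hmu' as [Hsq' [Htv' _]].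
  apply (ex_series_Rabs_le _ (fun m => 2 * (l2norm (mu i m) + l2norm (mu' i m)))).
  - intros m. rewrite Rabs_pos_eq by apply l2norm_nonneg. apply l2norm_sub_le; auto.
  - apply ex_series_scal_R, ex_series_plus_R; auto.
Qed.

Lemma ex_series_eucl_norm_sub :
  ex_series (fun m => eucl_norm d3 (fun k => mu I m k - mu' I m k)).
Proof.
  destruct Hmu as [_ [_ Hout]], Hmu' as [_ [_ Hout']].
  apply (ex_series_Rabs_le _ (fun m => 2 * (eucl_norm d3 (mu I m) + eucl_norm d3 (mu' I m)))).
  - intros m. rewrite Rabs_pos_eq by apply eucl_norm_nonneg. apply eucl_norm_sub_le.
  - apply ex_series_scal_R, ex_series_plus_R; [apply Hout | apply Hout']; lia.
Qed.

Lemma tv_sub_nonneg i : (i <= I)%nat -> 0 <= tv d1 d3 I i (fun m k => mu i m k - mu' i m k).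
Proof.
  intros HiI. destruct (Nat.eq_dec i 0) as [->|Hi0]; [|destruct (Nat.eq_dec i I) as [->|HiI']].
  - rewrite tv_0. apply fsum_nonneg. intros; apply l2norm_nonneg.
  - rewrite tv_output. apply Series_nonneg; [intros; apply eucl_norm_nonneg|].
    apply ex_series_eucl_norm_sub.
  - rewrite tv_hidden by lia. apply Series_nonneg; [intros; apply l2norm_nonneg|].
    apply ex_series_l2norm_sub; lia.
Qed.

Lemma tv_sub_le_param_dist i : (i <= I)%nat ->
  tv d1 d3 I i (fun m k => mu i m k - mu' i m k) <= param_dist d1 d3 I mu mu'.
Proof.
  intros HiI. apply (fsum_ge_term (S I) (fun i => tv d1 d3 I i (fun m k => mu i m k - mu' i m k))).
  - intros j Hj. apply tv_sub_nonneg. lia.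
  - lia.
Qed.

Lemma eucl_norm_sub_le_net_dist x x' :
  eucl_norm d1 (fun k => x k - x' k) <= net_dist d1 d3 I x mu x' mu'.
Proof.
  unfold net_dist. pose proof (tv_sub_nonneg 0 ltac:(lia)).
  pose proof (tv_sub_le_param_dist 0 ltac:(lia)). lra.
Qed.

Lemma tv_sub_le_net_dist x x' i : (i <= I)%nat ->
  tv d1 d3 I i (fun m k => mu i m k - mu' i m k) <= net_dist d1 d3 I x mu x' mu'.
Proof.
  intros HiI. unfold net_dist. pose proof (eucl_norm_nonneg d1 (fun k => x k - x' k)).
  pose proof (tv_sub_le_param_dist i HiI). lra.
Qed.

End TwoParameters.

Section Layers.

Variables (x : nat -> R) (mu : nat -> nat -> nat -> R).
Hypothesis Hmu : admissible d1 d3 I mu.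

Lemma layers_bounded j : (j < I)%nat ->
  exists M, 0 <= M /\ forall k, Rabs (layers d1 mu x j k) <= M.
Proof.
  pose proof Hmu as [Hsq [Htv _]]. induction j as [|j IH]; intros Hj.
  - exists ((1 + eucl_norm d1 x) * fsum (S d1) (fun m => l2norm (mu 0%nat m))). split.
    + apply Rmult_le_pos; [pose proof (eucl_norm_nonneg d1 x); lra|].
      apply fsum_nonneg. intros; apply l2norm_nonneg.
    + intros k. apply Rabs_fsum_mul_le; intros m Hm.
      * apply Rabs_le_l2norm, Hsq. exact Hj.
      * apply Rabs_rho0_le. exact Hm.
  - destruct (IH ltac:(lia)) as [M [HM Hy]].
    exists ((1 + M) * Series (fun m => l2norm (mu (S j) m))). split.
    + apply Rmult_le_pos; [lra|].
      apply Series_nonneg; [intros; apply l2norm_nonneg | apply Htv; lia].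
    + intros k. apply Rabs_Series_mul_le.
      * intros m. apply Rabs_le_l2norm, Hsq. exact Hj.
      * apply Htv; lia.
      * intros m. apply Rabs_rho_le; assumption.
Qed.

Lemma layer_0_continuous : layer_continuous_at d1 d3 I x mu 0 (fun _ => True).
Proof.
  intros eps Heps. pose proof Hmu as [Hsq _].
  destruct (small_perturbation (1 + eucl_norm d1 x) (fsum (S d1) (fun m => l2norm (mu 0%nat m))) eps)
    as [delta [Hd Hsmall]].
  { pose proof (eucl_norm_nonneg d1 x). lra. }
  { apply fsum_nonneg. intros; apply l2norm_nonneg. }
  { exact Heps. }
  exists delta. split; [exact Hd|]. intros x' mu' Hmu' Hdist k _.
  pose proof Hmu' as [Hsq' _].
  eapply Rle_trans.
  - apply (Rabs_fsum_mul_sub_le _ _ _ _ _ (fun m => l2norm (mu 0%nat m))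
      (fun m => l2norm (fun k => mu 0%nat m k - mu' 0%nat m k))); intros m Hm.
    + apply Rabs_le_l2norm, Hsq. lia.
    + apply (Rabs_le_l2norm (fun k => mu 0%nat m k - mu' 0%nat m k)).
      apply sq_summable_sub; [apply Hsq | apply Hsq']; lia.
    + apply Rabs_rho0_le. exact Hm.
    + apply rho0_sub_le. exact Hm.
  - rewrite <- tv_0.
    pose proof (tv_sub_le_net_dist mu mu' Hmu Hmu' x x' 0 ltac:(lia)).
    pose proof (eucl_norm_sub_le_net_dist mu mu' Hmu Hmu' x x').
    apply Hsmall; split; try lra.
    + apply tv_sub_nonneg; auto. lia.
    + apply eucl_norm_nonneg.
Qed.

(* [N] is the norm of the weight space of layer [S j]: [l2norm] for a hidden layer,
   [eucl_norm d3] for the output layer. *)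
Lemma layer_S_continuous j (N : (nat -> R) -> R) (P : nat -> Prop) M :
  (S j <= I)%nat -> 0 <= M -> (forall k, Rabs (layers d1 mu x j k) <= M) ->
  layer_continuous_at d1 d3 I x mu j (fun _ => True) ->
  (forall u, 0 <= N u) -> ex_series (fun m => N (mu (S j) m)) ->
  (forall w, tv d1 d3 I (S j) w = Series (fun m => N (w m))) ->
  (forall mu', admissible d1 d3 I mu' ->
     ex_series (fun m => N (fun k => mu (S j) m k - mu' (S j) m k))) ->
  (forall m k, P k -> Rabs (mu (S j) m k) <= N (mu (S j) m)) ->
  (forall mu' m k, admissible d1 d3 I mu' -> P k ->
     Rabs (mu (S j) m k - mu' (S j) m k) <= N (fun k => mu (S j) m k - mu' (S j) m k)) ->
  layer_continuous_at d1 d3 I x mu (S j) P.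
Proof.
  intros Hj HM Hy Hcont HN Eb Htv Ebd Hcoord Hcoord' eps Heps.
  destruct (Series_rho_sub_small (fun m => N (mu (S j) m)) M eps) as [ds [Hds Hsmall]];
    auto.
  destruct (Hcont ds Hds) as [dp [Hdp Hprev]].
  exists (Rmin ds dp). split; [apply Rmin_pos; assumption|].
  intros x' mu' Hmu' Hdist k Hk.
  pose proof (Rmin_l ds dp). pose proof (Rmin_r ds dp).
  apply Hsmall with (bd := fun m => N (fun k => mu (S j) m k - mu' (S j) m k)).
  - intros m. apply Hcoord, Hk.
  - intros m. apply Hcoord'; assumption.
  - apply Ebd, Hmu'.
  - rewrite <- Htv. pose proof (tv_sub_le_net_dist mu mu' Hmu Hmu' x x' (S j) Hj). lra.
  - exact Hy.
  - intros k'. apply Hprev; [assumption | lra | trivial].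
Qed.

Lemma layers_continuous j : (j < I)%nat -> layer_continuous_at d1 d3 I x mu j (fun _ => True).
Proof.
  pose proof Hmu as [Hsq [Htv _]]. induction j as [|j IH]; intros Hj.
  - apply layer_0_continuous.
  - destruct (layers_bounded j ltac:(lia)) as [M [HM Hy]].
    apply (layer_S_continuous j l2norm _ M); try assumption.
    + lia.
    + apply IH. lia.
    + intros; apply l2norm_nonneg.
    + apply Htv; lia.
    + intros w. apply tv_hidden; lia.
    + intros mu' Hmu'. apply ex_series_l2norm_sub; [assumption | assumption | lia | exact Hj].
    + intros m k _. apply Rabs_le_l2norm, Hsq. exact Hj.
    + intros mu' m k Hmu' _. apply (Rabs_le_l2norm (fun k => mu (S j) m k - mu' (S j) m k)).
      apply sq_summable_sub; [apply Hsq | apply Hmu']; exact Hj.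
Qed.

Lemma output_layer_continuous : layer_continuous_at d1 d3 I x mu I (fun k => (k < d3)%nat).
Proof.
  pose proof Hmu as [_ [_ Hout]].
  assert (HIj : I = S (Nat.pred I)) by lia. rewrite HIj at 2. set (j := Nat.pred I) in *.
  destruct (layers_bounded j ltac:(lia)) as [M [HM Hy]].
  apply (layer_S_continuous j (eucl_norm d3) _ M); try assumption.
  - lia.
  - apply layers_continuous. lia.
  - intros; apply eucl_norm_nonneg.
  - rewrite <- HIj. apply Hout. lia.
  - intros w. rewrite <- HIj. apply tv_output.
  - intros mu' Hmu'. rewrite <- HIj. apply ex_series_eucl_norm_sub; assumption.
  - intros m k Hk. apply Rabs_le_eucl_norm, Hk.
  - intros mu' m k _ Hk. apply (Rabs_le_eucl_norm d3 (fun k => mu (S j) m k - mu' (S j) m k)), Hk.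
Qed.

End Layers.

End Network.

Theorem proposition2 (d1 d3 I : nat) (HI : (1 <= I)%nat)
  (x : nat -> R) (mu : nat -> nat -> nat -> R) :
  admissible d1 d3 I mu ->
  forall eps : R, 0 < eps ->
  exists delta : R, 0 < delta /\
    forall (x' : nat -> R) (mu' : nat -> nat -> nat -> R),
      admissible d1 d3 I mu' ->
      eucl_norm d1 (fun k => x k - x' k) + param_dist d1 d3 I mu mu' < delta ->
      eucl_norm d3 (fun k => net d1 I mu x k - net d1 I mu' x' k) < eps.
Proof.
  intros Hmu eps Heps.
  pose proof (sqrt_pos (INR d3)) as Hs.
  set (eps' := eps / (sqrt (INR d3) + 1)).
  assert (Heps' : 0 < eps') by (apply Rdiv_lt_0_compat; lra).
  destruct (output_layer_continuous d1 d3 I HI x mu Hmu eps' Heps') as [delta [Hd Hclose]].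
  exists delta. split; [exact Hd|]. intros x' mu' Hmu' Hdist.
  eapply Rle_lt_trans.
  - apply (eucl_norm_le_sup d3 _ eps'); [lra|]. intros k Hk. apply Hclose; assumption.
  - apply (Rmult_lt_reg_r (sqrt (INR d3) + 1)); [lra|]. unfold eps'.
    replace (sqrt (INR d3) * (eps / (sqrt (INR d3) + 1)) * (sqrt (INR d3) + 1))
      with (sqrt (INR d3) * eps) by (field; lra).
    lra.
Qed.
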